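(* Consider, for $i=1,2$, $a\in[0,A]$, $t\ge 0$, the age-structured predator–prey system $$\partial_t x_1(a,t)+\partial_a x_1(a,t)=-x_1(a,t)\Big[\mu_1(a)+u(t)+\int_0^A g_1(\alpha)x_2(\alpha,t)\,d\alpha\Big],$$ $$\partial_t x_2(a,t)+\partial_a x_2(a,t)=-x_2(a,t)\Big[\mu_2(a)+u(t)+\frac{1}{\int_0^A g_2(\alpha)x_1(\alpha,t)\,d\alpha}\Big],$$ $$x_i(0,t)=\int_0^A k_i(a)x_i(a,t)\,da .$$ Let $u^*\in(0,\min\{\zeta_1,\zeta_2\})$. Then the system admits, with constant input $u\equiv u^*$, a time-independent solution $(x_1^*,x_2^* )$ with positive values, given by $$x_i^*(a)=x_i^*(0)\,\tilde x_i^*(a),\qquad \tilde x_i^*(a)=e^{-\int_0^a(\zeta_i+\mu_i(s))ds},$$ $$x_1^*(0)=\frac{1}{(\zeta_2-u^* )\int_0^A g_2(a)\tilde x_1^*(a)\,da}>0,\qquad x_2^*(0)=\frac{\zeta_1-u^*}{\int_0^A g_1(a)\tilde x_2^*(a)\,da}>0,$$ and these satisfy $u^*=\zeta_1-\lambda_2=\zeta_2-\frac1{\lambda_1}$, where $\lambda_1:=\int_0^A g_2(a)x_1^*(a)\,da>0$ and $\lambda_2:=\int_0^A g_1(a)x_2^*(a)\,da>0$. Conversely, every time-independent solution $(x_1^*,x_2^* )$ with positive values corresponding to a constant input $u^*>0$ is of this form, and necessarily $u^*\in(0,\min\{\zeta_1,\zeta_2\})$.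
   Context: $A>0$ is the maximal age. For $i=1,2$, $\mu_i,k_i,g_i:[0,A]\to[0,\infty)$ are (piecewise continuous) functions with $\int_0^A\mu_i>0$, $\int_0^A k_i>0$, $\int_0^A g_i>0$ (mortality, birth and interaction kernels). $\zeta_i\in\mathbb R$ denotes the unique real number satisfying the Lotka–Sharpe condition $\int_0^A k_i(a)e^{-\int_0^a(\mu_i(s)+\zeta_i)ds}\,da=1$. *)

From Stdlib Require Import Reals.
From Coquelicot Require Import Coquelicot.
Open Scope R_scope.

Definition piecewise_continuous (A : R) (f : R -> R) : Prop :=
  exists (n : nat) (p : nat -> R),
    p O = 0 /\ p n = A /\
    (forall j, (j < n)%nat -> p j < p (S j)) /\
    (forall j, (j < n)%nat ->
       (forall a, p j < a < p (S j) -> continuous f a) /\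
       (exists l : R, filterlim f (at_right (p j)) (locally l)) /\
       (exists l : R, filterlim f (at_left (p (S j))) (locally l))).

Definition admissible_kernel (A : R) (f : R -> R) : Prop :=
  piecewise_continuous A f /\ (forall a, 0 <= a <= A -> 0 <= f a) /\
  0 < RInt f 0 A.

(* Lotka--Sharpe condition defining zeta_i. *)
Definition lotka_sharpe (A : R) (mu k : R -> R) (zeta : R) : Prop :=
  RInt (fun a => k a * exp (- RInt (fun s => mu s + zeta) 0 a)) 0 A = 1.

Definition xtilde (mu : R -> R) (zeta : R) (a : R) : R :=
  exp (- RInt (fun s => zeta + mu s) 0 a).

Definition x1star0 (A : R) (mu1 g2 : R -> R) (zeta1 zeta2 ustar : R) : R :=
  / ((zeta2 - ustar) * RInt (fun a => g2 a * xtilde mu1 zeta1 a) 0 A).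

Definition x2star0 (A : R) (mu2 g1 : R -> R) (zeta1 zeta2 ustar : R) : R :=
  (zeta1 - ustar) / RInt (fun a => g1 a * xtilde mu2 zeta2 a) 0 A.

(* Time-independent solution (x1, x2) of the predator--prey system on [0,A]
   with constant input u, in integrated (mild) form along the age variable:
     x_i(a) = x_i(0) - int_0^a x_i(s) [mu_i(s) + u + c_i] ds,
   with c_1 = int g1 x2 and c_2 = 1 / int g2 x1, plus the renewal
   boundary conditions x_i(0) = int_0^A k_i x_i. *)
Definition steady_state (A : R) (mu1 mu2 k1 k2 g1 g2 : R -> R) (u : R)
    (x1 x2 : R -> R) : Prop :=
  let I1 := RInt (fun al => g1 al * x2 al) 0 A in
  let I2 := RInt (fun al => g2 al * x1 al) 0 A in
  ex_RInt (fun al => g1 al * x2 al) 0 A /\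
  ex_RInt (fun al => g2 al * x1 al) 0 A /\
  ex_RInt (fun a => k1 a * x1 a) 0 A /\
  ex_RInt (fun a => k2 a * x2 a) 0 A /\
  (forall a, 0 <= a <= A ->
     ex_RInt (fun s => x1 s * (mu1 s + u + I1)) 0 a /\
     x1 a = x1 0 - RInt (fun s => x1 s * (mu1 s + u + I1)) 0 a) /\
  (forall a, 0 <= a <= A ->
     ex_RInt (fun s => x2 s * (mu2 s + u + / I2)) 0 a /\
     x2 a = x2 0 - RInt (fun s => x2 s * (mu2 s + u + / I2)) 0 a) /\
  x1 0 = RInt (fun a => k1 a * x1 a) 0 A /\
  x2 0 = RInt (fun a => k2 a * x2 a) 0 A.

Definition positive_on (A : R) (x : R -> R) : Prop :=
  forall a, 0 <= a <= A -> 0 < x a.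

From Stdlib Require Import Reals Lra Lia.
From Coquelicot Require Import Coquelicot.
Open Scope R_scope.

(* A steady state solves, for each species, the linear decay equation x' = -(mu_i + c_i) x with
   constant rate c_1 = u + int g1 x2 and c_2 = u + 1 / int g2 x1, so x_i is x_i(0) times the
   survival profile xtilde_i in which zeta_i is replaced by c_i.  The renewal condition then says
   that c_i is a root of the Lotka-Sharpe equation, whose left side is strictly decreasing in the
   rate; hence c_i = zeta_i.  Solving zeta_1 = u + lambda_2 and zeta_2 = u + 1/lambda_1 for x_i(0)
   gives the stated formulas, and lambda_i > 0 forces u < zeta_i. *)

(** * Continuous extensions *)

(* Continuity on a closed interval, and continuity on an open piece with one-sided limits at its
   ends, are both expressed as agreement with an everywhere continuous function. *)
Definition extends_continuously (D : R -> Prop) (h : R -> R) : Prop :=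
  exists H, (forall x, continuous H x) /\ forall x, D x -> H x = h x.

Section ContinuousExtension.

Variable D : R -> Prop.

Lemma extends_continuously_const k : extends_continuously D (fun _ => k).
Proof. exists (fun _ => k). split; [intros; apply continuous_const | easy]. Qed.

Lemma extends_continuously_ext h h' :
  (forall x, D x -> h x = h' x) -> extends_continuously D h -> extends_continuously D h'.
Proof.
  intros Ehh' [H [HC EH]]. exists H. split; [exact HC |].
  intros x Dx. rewrite <- Ehh'; auto.
Qed.

Lemma extends_continuously_plus h1 h2 :
  extends_continuously D h1 -> extends_continuously D h2 ->
  extends_continuously D (fun x => h1 x + h2 x).
Proof.
  intros [H1 [C1 E1]] [H2 [C2 E2]]. exists (fun x => H1 x + H2 x). split.
  - intros x. apply (continuous_plus H1 H2); auto.
  - intros x Dx. rewrite E1, E2; auto.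
Qed.

Lemma extends_continuously_mult h1 h2 :
  extends_continuously D h1 -> extends_continuously D h2 ->
  extends_continuously D (fun x => h1 x * h2 x).
Proof.
  intros [H1 [C1 E1]] [H2 [C2 E2]]. exists (fun x => H1 x * H2 x). split.
  - intros x. apply (continuous_mult H1 H2); auto.
  - intros x Dx. rewrite E1, E2; auto.
Qed.

Lemma extends_continuously_comp g h : (forall y, continuous g y) ->
  extends_continuously D h -> extends_continuously D (fun x => g (h x)).
Proof.
  intros Cg [H [C E]]. exists (fun x => g (H x)). split.
  - intros x. apply (continuous_comp H g); auto.
  - intros x Dx. rewrite E; auto.
Qed.

Lemma extends_continuously_continuous h x :
  extends_continuously D h -> locally x D -> continuous h x.
Proof.
  intros [H [C E]] Dx. apply (continuous_ext_loc h H x); auto.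
  apply (filter_imp D); auto.
Qed.

End ContinuousExtension.

Lemma extends_continuously_subset (D D' : R -> Prop) h :
  (forall x, D' x -> D x) -> extends_continuously D h -> extends_continuously D' h.
Proof. intros HD [H [C E]]. exists H. split; auto. Qed.


Lemma continuous_Ropp x : continuous Ropp x.
Proof. exact (continuous_opp (fun z : R => z) x (continuous_id x)). Qed.

Lemma continuous_Rplus_const c x : continuous (fun y => c + y) x.
Proof.
  apply (continuous_plus (fun _ => c) (fun y => y)); [apply continuous_const | apply continuous_id].
Qed.

Lemma locally_open_interval c d x : c < x < d -> locally x (fun y => c < y < d).
Proof. intros Hx. apply (locally_interval _ x c d); [apply Hx | apply Hx | now split]. Qed.

Lemma continuous_of_lipschitz_at (H : R -> R) (K : R) x :
  (forall y, Rabs (H y - H x) <= K * Rabs (y - x)) -> continuous H x.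
Proof.
  intros HK. apply filterlim_locally. intros eps.
  assert (HK1 : 0 < Rabs K + 1) by (pose proof (Rabs_pos K); lra).
  assert (Hd : 0 < eps / (Rabs K + 1)) by (apply Rdiv_lt_0_compat; [apply cond_pos | lra]).
  exists (mkposreal _ Hd). intros y Hy. change (Rabs (y - x) < eps / (Rabs K + 1)) in Hy.
  change (Rabs (H y - H x) < eps). eapply Rle_lt_trans; [apply HK |].
  apply Rle_lt_trans with ((Rabs K + 1) * Rabs (y - x)).
  - apply Rmult_le_compat_r; [apply Rabs_pos | pose proof (Rle_abs K); lra].
  - apply Rmult_lt_reg_l with (/ (Rabs K + 1)); [apply Rinv_0_lt_compat; lra |].
    rewrite <- Rmult_assoc, Rinv_l, Rmult_1_l by lra. rewrite Rmult_comm. exact Hy.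
Qed.

Definition clamp (c d x : R) : R := Rmax c (Rmin d x).

Lemma clamp_in c d x : c <= d -> c <= clamp c d x <= d.
Proof. intros. unfold clamp, Rmax, Rmin. repeat destruct Rle_dec; lra. Qed.

Lemma clamp_id c d x : c <= x <= d -> clamp c d x = x.
Proof. intros. unfold clamp, Rmax, Rmin. repeat destruct Rle_dec; lra. Qed.

Lemma clamp_lipschitz c d x y : c <= d -> Rabs (clamp c d y - clamp c d x) <= Rabs (y - x).
Proof.
  intros. unfold clamp, Rmax, Rmin. repeat destruct Rle_dec;
  unfold Rabs; repeat destruct Rcase_abs; lra.
Qed.

Lemma ex_RInt_subinterval (f : R -> R) c d x y : ex_RInt f c d ->
  c <= x <= d -> c <= y <= d -> ex_RInt f x y.
Proof.
  intros Hf Hx Hy.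
  assert (Hsub : forall u v, c <= u <= v -> v <= d -> ex_RInt f u v).
  { intros u v Hu Hv. apply (ex_RInt_Chasles_2 f c u v); [lra |].
    apply (ex_RInt_Chasles_1 f c v d); [lra | exact Hf]. }
  destruct (Rle_dec x y).
  - apply Hsub; lra.
  - apply ex_RInt_swap, Hsub; lra.
Qed.

Lemma extends_continuously_RInt (f : R -> R) c d : c <= d -> ex_RInt f c d ->
  extends_continuously (fun x => c <= x <= d) (fun x => RInt f c x).
Proof.
  intros Hcd Hf. destruct (ex_RInt_ub f c d Hf) as [M HM].
  rewrite Rmin_left, Rmax_right in HM by lra.
  assert (HM0 : 0 <= M) by (apply Rle_trans with (norm (f c)); [apply norm_ge_0 | apply HM; lra]).
  exists (fun x => RInt f c (clamp c d x)). split.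
  - intros x. apply continuous_of_lipschitz_at with M. intros y.
    pose proof (clamp_in c d x Hcd) as Hx. pose proof (clamp_in c d y Hcd) as Hy.
    pose proof (clamp_lipschitz c d x y Hcd) as Hlip.
    set (x' := clamp c d x) in *. set (y' := clamp c d y) in *.
    assert (Hxy : RInt f c y' - RInt f c x' = RInt f x' y').
    { rewrite <- (RInt_Chasles f c x' y');
        [change (RInt f c x' + RInt f x' y' - RInt f c x' = RInt f x' y'); ring | |];
        apply (ex_RInt_subinterval f c d); auto; lra. }
    rewrite Hxy, Rmult_comm.
    apply Rle_trans with (Rabs (y' - x') * M); [| apply Rmult_le_compat_r; auto].
    apply (norm_RInt_le_const_abs (V:=R_NormedModule) f x' y' _ M).
    + intros t Ht. apply HM. split.
      * apply Rle_trans with (Rmin x' y'); [apply Rmin_glb | apply Ht]; lra.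
      * apply Rle_trans with (Rmax x' y'); [apply Ht | apply Rmax_lub]; lra.
    + apply (RInt_correct (V:=R_CompleteNormedModule)), (ex_RInt_subinterval f c d); auto.
  - intros x Hx. now rewrite clamp_id.
Qed.

Lemma derive_0_constant c d h : c <= d ->
  extends_continuously (fun x => c <= x <= d) h ->
  (forall x, c < x < d -> is_derive h x 0) -> h d = h c.
Proof.
  intros Hcd [H [HC HE]] HD.
  destruct (MVT_gen H c d (fun _ => 0)) as [z [_ Hz]]; simpl; rewrite ?Rmin_left, ?Rmax_right by lra.
  - intros x Hx. apply (is_derive_ext_loc h H); [| apply HD; lra].
    apply (filter_imp (fun y => c < y < d)); [intros y Hy; symmetry; apply HE; lra |].
    now apply locally_open_interval.
  - intros x _. apply continuity_pt_filterlim, HC.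
  - rewrite <- (HE d), <- (HE c) by lra. lra.
Qed.

(** * Piecewise continuous functions *)

Definition subdivision (A : R) (n : nat) (p : nat -> R) : Prop :=
  p O = 0 /\ p n = A /\ forall j, (j < n)%nat -> p j < p (S j).

Lemma subdivision_le A n p : subdivision A n p -> forall i j, (i <= j <= n)%nat -> p i <= p j.
Proof.
  intros [_ [_ Hp]] i j. induction j as [| j IH]; intros Hij.
  - replace i with O by lia. lra.
  - destruct (Nat.eq_dec i (S j)) as [-> | Hi]; [lra |].
    apply Rle_trans with (p j); [apply IH; lia | left; apply Hp; lia].
Qed.

Lemma subdivision_bounds A n p : subdivision A n p -> forall j, (j <= n)%nat -> 0 <= p j <= A.
Proof.
  intros Hp j Hj. pose proof (subdivision_le A n p Hp) as Hle. destruct Hp as [H0 [Hn _]].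
  rewrite <- H0, <- Hn. split; apply Hle; lia.
Qed.

Lemma subdivision_derive_0_constant A n p h : subdivision A n p ->
  extends_continuously (fun x => 0 <= x <= A) h ->
  (forall j, (j < n)%nat -> forall x, p j < x < p (S j) -> is_derive h x 0) ->
  forall a, 0 <= a <= A -> h a = h 0.
Proof.
  intros Hp Hh HD.
  assert (Hpiece : forall j, (j <= n)%nat -> forall a, 0 <= a <= p j -> h a = h 0).
  { induction j as [| j IH]; intros Hj a Ha.
    - destruct Hp as [H0 _]. replace a with 0 by lra. reflexivity.
    - pose proof (subdivision_bounds A n p Hp j ltac:(lia)).
      pose proof (subdivision_bounds A n p Hp (S j) Hj).
      destruct (Rle_dec a (p j)); [apply IH; [lia | lra] |].
      rewrite <- (IH ltac:(lia) (p j)) by lra.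
      apply derive_0_constant; [lra | |].
      + apply (extends_continuously_subset (fun x => 0 <= x <= A)); [intros; lra | exact Hh].
      + intros x Hx. apply (HD j); [lia | lra]. }
  intros a Ha. apply (Hpiece n); [lia |]. destruct Hp as [_ [-> _]]. exact Ha.
Qed.

Definition piecewise_extendable (A : R) (f : R -> R) : Prop :=
  exists n p, subdivision A n p /\
    forall j, (j < n)%nat -> extends_continuously (fun x => p j < x < p (S j)) f.

Lemma piecewise_continuous_extendable A f : piecewise_continuous A f -> piecewise_extendable A f.
Proof.
  intros [n [p [H0 [Hn [Hp Hpieces]]]]]. exists n, p. split; [repeat split; auto |].
  intros j Hj. destruct (Hpieces j Hj) as [Hc [[l1 L1] [l2 L2]]].
  destruct (C0_extension_lt f l1 l2 (p j) (p (S j)) (Hp j Hj) Hc L1 L2) as [g [Hg [Egf _]]].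
  now exists g.
Qed.

Lemma piecewise_extendable_comp A g f : (forall y, continuous g y) ->
  piecewise_extendable A f -> piecewise_extendable A (fun s => g (f s)).
Proof.
  intros Hg [n [p [Hp Hf]]]. exists n, p. split; [exact Hp |].
  intros j Hj. now apply extends_continuously_comp, Hf.
Qed.

Lemma piecewise_extendable_nonneg A f : piecewise_extendable A f -> 0 <= A.
Proof.
  intros [n [p [Hp _]]]. pose proof (subdivision_bounds A n p Hp n (Nat.le_refl n)). lra.
Qed.

Lemma piecewise_extendable_subdivision A f : piecewise_extendable A f ->
  exists n p, subdivision A n p /\
    forall j, (j < n)%nat -> forall x, p j < x < p (S j) -> 0 < x < A /\ continuous f x.
Proof.
  intros [n [p [Hp Hf]]]. exists n, p. split; [exact Hp |]. intros j Hj x Hx. split.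
  - pose proof (subdivision_bounds A n p Hp j ltac:(lia)).
    pose proof (subdivision_bounds A n p Hp (S j) Hj). lra.
  - apply (extends_continuously_continuous _ f x (Hf j Hj)). now apply locally_open_interval.
Qed.

Lemma ex_RInt_piecewise_mult A f h : piecewise_extendable A f ->
  extends_continuously (fun x => 0 <= x <= A) h -> ex_RInt (fun x => f x * h x) 0 A.
Proof.
  intros [n [p [Hp Hf]]] [H [HC HE]].
  assert (Hpiece : forall j, (j <= n)%nat -> ex_RInt (fun x => f x * h x) 0 (p j)).
  { induction j as [| j IH]; intros Hj.
    - destruct Hp as [-> _]. apply ex_RInt_point.
    - apply ex_RInt_Chasles with (p j); [apply IH; lia |].
      destruct (Hf j ltac:(lia)) as [F [FC FE]].
      pose proof (subdivision_bounds A n p Hp j ltac:(lia)).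
      pose proof (subdivision_bounds A n p Hp (S j) Hj).
      destruct Hp as [_ [_ Hlt]]. pose proof (Hlt j ltac:(lia)).
      apply (ex_RInt_ext (fun x => F x * H x)).
      + rewrite Rmin_left, Rmax_right by lra. intros x Hx.
        rewrite FE, HE by lra. reflexivity.
      + apply (ex_RInt_continuous (V:=R_CompleteNormedModule)). intros z _.
        apply (continuous_mult F H); auto. }
  destruct Hp as [H0 [Hn Hlt]]. rewrite <- Hn. apply Hpiece. lia.
Qed.

Lemma ex_RInt_piecewise A f : piecewise_extendable A f -> ex_RInt f 0 A.
Proof.
  intros Hf. apply (ex_RInt_ext (fun x => f x * 1)); [intros; apply Rmult_1_r |].
  apply ex_RInt_piecewise_mult; [exact Hf | apply extends_continuously_const].
Qed.

Lemma is_derive_RInt_0 (f : R -> R) A x : 0 < x < A -> ex_RInt f 0 A ->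
  continuous f x -> is_derive (fun y => RInt f 0 y) x (f x).
Proof.
  intros Hx Hf Hc. apply (is_derive_RInt (V:=R_CompleteNormedModule) f _ 0 x); [| exact Hc].
  apply (filter_imp (fun y => 0 < y < A)); [| now apply locally_open_interval].
  intros y Hy. apply (RInt_correct (V:=R_CompleteNormedModule)).
  apply (ex_RInt_subinterval f 0 A); auto; lra.
Qed.

(** * The decay equation *)

Definition survival (q : R -> R) (a : R) : R := exp (- RInt q 0 a).

Definition solves_decay (A : R) (q x : R -> R) : Prop :=
  forall a, 0 <= a <= A ->
    ex_RInt (fun s => x s * q s) 0 a /\ x a = x 0 - RInt (fun s => x s * q s) 0 a.

Lemma survival_0 q : survival q 0 = 1.
Proof. unfold survival. rewrite RInt_point. change (exp (- 0) = 1). now rewrite Ropp_0, exp_0. Qed.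

Lemma extends_continuously_survival A q : 0 <= A -> ex_RInt q 0 A ->
  extends_continuously (fun x => 0 <= x <= A) (survival q).
Proof.
  intros HA Hq.
  apply (extends_continuously_comp _ exp (fun a => - RInt q 0 a)); [apply continuous_exp |].
  apply (extends_continuously_comp _ Ropp (fun a => RInt q 0 a)).
  - apply continuous_Ropp.
  - now apply extends_continuously_RInt.
Qed.

Lemma solves_decay_ext A q q' x : (forall s, q s = q' s) -> solves_decay A q x -> solves_decay A q' x.
Proof.
  intros Eq Hx a Ha. destruct (Hx a Ha) as [Hi Ex].
  assert (Hext : forall s, x s * q s = x s * q' s) by (intros; now rewrite Eq).
  split; [apply (ex_RInt_ext _ _ _ _ (fun s _ => Hext s) Hi) |].
  now rewrite <- (RInt_ext _ _ _ _ (fun s _ => Hext s)).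
Qed.

Lemma solves_decay_scale A q x c : solves_decay A q x -> solves_decay A q (fun a => c * x a).
Proof.
  intros Hx a Ha. destruct (Hx a Ha) as [Hi Ex].
  assert (Hext : forall s, scal c (x s * q s) = c * x s * q s)
    by (intros; change (c * (x s * q s) = c * x s * q s); ring).
  split.
  - apply (ex_RInt_ext _ _ _ _ (fun s _ => Hext s)), (ex_RInt_scal (V:=R_NormedModule)), Hi.
  - rewrite <- (RInt_ext _ _ _ _ (fun s _ => Hext s)).
    rewrite (RInt_scal (V:=R_CompleteNormedModule)) by exact Hi.
    rewrite Ex. change (c * (x 0 - RInt (fun s => x s * q s) 0 a) =
      c * x 0 - c * RInt (fun s => x s * q s) 0 a). ring.
Qed.

Lemma survival_solves_decay A q : piecewise_extendable A q -> solves_decay A q (survival q).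
Proof.
  intros Hq. pose proof (piecewise_extendable_nonneg A q Hq) as HA.
  pose proof (ex_RInt_piecewise A q Hq) as Iq.
  set (X := survival q).
  assert (WX : extends_continuously (fun x => 0 <= x <= A) X) by now apply extends_continuously_survival.
  assert (IXq : ex_RInt (fun s => X s * q s) 0 A).
  { apply (ex_RInt_ext (fun s => q s * X s)); [intros; apply Rmult_comm |].
    now apply ex_RInt_piecewise_mult. }
  set (H := fun a => X a + RInt (fun s => X s * q s) 0 a).
  assert (WH : extends_continuously (fun x => 0 <= x <= A) H).
  { apply extends_continuously_plus; [exact WX | now apply extends_continuously_RInt]. }
  destruct (piecewise_extendable_subdivision A q Hq) as [n [p [Hp Hpieces]]].
  assert (DH : forall j, (j < n)%nat -> forall x, p j < x < p (S j) -> is_derive H x 0).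
  { intros j Hj x Hx. destruct (Hpieces j Hj x Hx) as [Hx0 Hqx].
    assert (DX : is_derive X x (- q x * X x)).
    { apply (is_derive_comp exp (fun y => - RInt q 0 y)); [apply is_derive_exp |].
      apply (is_derive_opp (fun y => RInt q 0 y)). now apply is_derive_RInt_0 with A. }
    assert (DI : is_derive (fun y => RInt (fun s => X s * q s) 0 y) x (X x * q x)).
    { apply (is_derive_RInt_0 (fun s => X s * q s) A x Hx0 IXq).
      apply (continuous_mult X q); [| exact Hqx].
      apply (extends_continuously_continuous _ X x WX), (filter_imp (fun y => 0 < y < A));
        [intros; lra | now apply locally_open_interval]. }
    replace 0 with (plus (- q x * X x) (X x * q x)) by (change (- q x * X x + X x * q x = 0); ring).
    now apply (is_derive_plus X). }
  intros a Ha. split; [apply (ex_RInt_subinterval _ 0 A); auto; lra |].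
  pose proof (subdivision_derive_0_constant A n p H Hp WH DH a Ha) as EH.
  unfold H in EH. rewrite RInt_point in EH. unfold X in *. rewrite survival_0 in *.
  change (survival q a + RInt (fun s => survival q s * q s) 0 a = 1 + 0) in EH. lra.
Qed.

Lemma solves_decay_extends_continuously A q x : 0 <= A -> solves_decay A q x ->
  extends_continuously (fun a => 0 <= a <= A) x.
Proof.
  intros HA Hx. apply (extends_continuously_ext _ (fun a => x 0 + - RInt (fun s => x s * q s) 0 a)).
  - intros a Ha. rewrite (proj2 (Hx a Ha)). ring.
  - apply extends_continuously_plus; [apply extends_continuously_const |].
    apply (extends_continuously_comp _ Ropp); [apply continuous_Ropp |].
    apply extends_continuously_RInt; [exact HA | apply Hx; lra].
Qed.

Lemma solves_decay_is_derive A q x t : solves_decay A q x -> 0 < t < A -> continuous q t ->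
  is_derive x t (- (x t * q t)).
Proof.
  intros Hx Ht Hqt. assert (Ixq : ex_RInt (fun s => x s * q s) 0 A) by (apply Hx; lra).
  apply (is_derive_ext_loc (fun y => x 0 - RInt (fun s => x s * q s) 0 y)).
  - apply (filter_imp (fun y => 0 < y < A)); [| now apply locally_open_interval].
    intros y Hy. symmetry. apply (Hx y). lra.
  - replace (- (x t * q t)) with (0 - x t * q t) by ring.
    apply (is_derive_minus (fun _ => x 0));
      [exact (is_derive_const (K:=R_AbsRing) (V:=R_NormedModule) (x 0) t) |].
    apply (is_derive_RInt_0 (fun s => x s * q s) A t Ht Ixq), (continuous_mult x q); [| exact Hqt].
    apply (extends_continuously_continuous (fun a => 0 <= a <= A) x t).
    { apply (solves_decay_extends_continuously A q x); [lra | exact Hx]. }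
    apply (filter_imp (fun y => 0 < y < A)); [intros; lra | now apply locally_open_interval].
Qed.

Lemma decay_solution_unique A q x : piecewise_extendable A q -> solves_decay A q x ->
  forall a, 0 <= a <= A -> x a = x 0 * survival q a.
Proof.
  intros Hq Hx. pose proof (piecewise_extendable_nonneg A q Hq) as HA.
  pose proof (ex_RInt_piecewise A q Hq) as Iq.
  set (E := fun a => exp (RInt q 0 a)).
  set (Y := fun a => x a * E a).
  assert (WY : extends_continuously (fun a => 0 <= a <= A) Y).
  { apply extends_continuously_mult; [now apply (solves_decay_extends_continuously A q) |].
    apply (extends_continuously_comp _ exp (fun a => RInt q 0 a)); [apply continuous_exp |].
    now apply extends_continuously_RInt. }
  destruct (piecewise_extendable_subdivision A q Hq) as [n [p [Hp Hpieces]]].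
  assert (DY : forall j, (j < n)%nat -> forall t, p j < t < p (S j) -> is_derive Y t 0).
  { intros j Hj t Ht. destruct (Hpieces j Hj t Ht) as [Ht0 Hqt].
    assert (DE : is_derive E t (q t * E t)).
    { apply (is_derive_comp exp (fun y => RInt q 0 y)); [apply is_derive_exp |].
      now apply is_derive_RInt_0 with A. }
    replace 0 with (plus (mult (- (x t * q t)) (E t)) (mult (x t) (q t * E t)))
      by (change (- (x t * q t) * E t + x t * (q t * E t) = 0); ring).
    apply (is_derive_mult x E); [now apply (solves_decay_is_derive A q) | exact DE |].
    intros; apply Rmult_comm. }
  intros a Ha. pose proof (subdivision_derive_0_constant A n p Y Hp WY DY a Ha) as EY.
  unfold Y, E in EY. rewrite RInt_point in EY. change (x a * exp (RInt q 0 a) = x 0 * exp 0) in EY.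
  rewrite exp_0, Rmult_1_r in EY. unfold survival. rewrite exp_Ropp, <- EY.
  field. apply Rgt_not_eq, exp_pos.
Qed.

(** * The renewal integral *)

Lemma exp_le_exp x y : x <= y -> exp x <= exp y.
Proof. intros [Hxy | ->]; [left; now apply exp_increasing | right; reflexivity]. Qed.

Lemma xtilde_0 mu z : xtilde mu z 0 = 1.
Proof. apply survival_0. Qed.

Lemma xtilde_eq mu z a : ex_RInt mu 0 a -> xtilde mu z a = exp (- (z * a + RInt mu 0 a)).
Proof.
  intros Hmu. unfold xtilde. do 2 f_equal.
  rewrite (RInt_plus (V:=R_CompleteNormedModule) (fun _ => z) mu) by (auto; apply ex_RInt_const).
  rewrite RInt_const. change ((a - 0) * z + RInt mu 0 a = z * a + RInt mu 0 a). ring.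
Qed.

Lemma xtilde_shift mu z z' a : ex_RInt mu 0 a ->
  xtilde mu z' a = xtilde mu z a * exp (- ((z' - z) * a)).
Proof. intros Hmu. rewrite !xtilde_eq, <- exp_plus by exact Hmu. f_equal. ring. Qed.

Lemma extends_continuously_xtilde A mu z : 0 <= A -> ex_RInt mu 0 A ->
  extends_continuously (fun a => 0 <= a <= A) (xtilde mu z).
Proof.
  intros HA Hmu. apply extends_continuously_survival; [exact HA |].
  apply (ex_RInt_plus (V:=R_NormedModule) (fun _ => z) mu); [apply ex_RInt_const | exact Hmu].
Qed.

Lemma xtilde_lower_bound A mu z a : ex_RInt mu 0 A -> (forall s, 0 <= s <= A -> 0 <= mu s) ->
  0 <= a <= A -> exp (- (Rabs z * A + RInt mu 0 A)) <= xtilde mu z a.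
Proof.
  intros Hmu Hmu0 Ha. rewrite xtilde_eq by (apply (ex_RInt_subinterval _ 0 A); auto; lra).
  apply exp_le_exp, Ropp_le_contravar, Rplus_le_compat.
  - apply Rle_trans with (Rabs z * a); [| apply Rmult_le_compat_l; [apply Rabs_pos | lra]].
    rewrite <- (Rabs_pos_eq a) at 2 by lra. rewrite <- Rabs_mult. apply Rle_abs.
  - rewrite <- (RInt_Chasles mu 0 a A) by (apply (ex_RInt_subinterval _ 0 A); auto; lra).
    assert (0 <= RInt mu a A).
    { apply RInt_ge_0; [lra | apply (ex_RInt_subinterval _ 0 A); auto; lra | intros; apply Hmu0; lra]. }
    change (RInt mu 0 a <= RInt mu 0 a + RInt mu a A). lra.
Qed.

Lemma lotka_sharpe_xtilde A mu k zeta : lotka_sharpe A mu k zeta ->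
  RInt (fun a => k a * xtilde mu zeta a) 0 A = 1.
Proof.
  unfold lotka_sharpe, xtilde. intros <-. apply RInt_ext. intros a _.
  do 3 f_equal. apply RInt_ext. intros s _. apply Rplus_comm.
Qed.

Lemma RInt_tail_pos (k : R -> R) A : 0 <= A -> ex_RInt k 0 A -> 0 < RInt k 0 A ->
  exists e, 0 < e < A /\ 0 < RInt k e A.
Proof.
  intros HA Hk HK.
  assert (HA' : 0 < A).
  { destruct HA as [HA | <-]; [exact HA |]. rewrite RInt_point in HK. now apply Rlt_irrefl in HK. }
  destruct (extends_continuously_RInt k 0 A HA Hk) as [H [HC HE]].
  assert (HK2 : 0 < RInt k 0 A / 2) by lra.
  destruct (proj1 (filterlim_locally H (H 0)) (HC 0) (mkposreal _ HK2)) as [d Hd].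
  set (e := Rmin (d / 2) (A / 2)).
  assert (He : 0 < e < A /\ e < d).
  { pose proof (cond_pos d). pose proof (Rmin_l (d / 2) (A / 2)). pose proof (Rmin_r (d / 2) (A / 2)).
    unfold e. split; [split; [apply Rmin_glb_lt |] |]; lra. }
  exists e. split; [apply He |].
  assert (Hsmall : Rabs (H e - H 0) < RInt k 0 A / 2).
  { apply (Hd e). change (Rabs (e - 0) < d). rewrite Rminus_0_r, Rabs_pos_eq; lra. }
  rewrite !HE, RInt_point in Hsmall by lra.
  change (Rabs (RInt k 0 e - 0) < RInt k 0 A / 2) in Hsmall. rewrite Rminus_0_r in Hsmall.
  assert (Hsplit : RInt k 0 e + RInt k e A = RInt k 0 A)
    by (apply (RInt_Chasles k 0 e A); apply (ex_RInt_subinterval _ 0 A); auto; lra).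
  pose proof (Rle_abs (RInt k 0 e)). lra.
Qed.

Lemma RInt_mult_pos (g h : R -> R) c e d m : c <= e < d ->
  ex_RInt g e d -> ex_RInt (fun x => g x * h x) c d -> 0 < RInt g e d -> 0 < m ->
  (forall x, c <= x <= d -> 0 <= g x /\ 0 <= h x) -> (forall x, e <= x <= d -> m <= h x) ->
  0 < RInt (fun x => g x * h x) c d.
Proof.
  intros Hced Ig Igh Hg Hm Hpos Hlow.
  assert (Igh' : forall x y, c <= x <= d -> c <= y <= d -> ex_RInt (fun x => g x * h x) x y)
    by (intros; apply (ex_RInt_subinterval _ c d); auto).
  rewrite <- (RInt_Chasles _ c e d) by (apply Igh'; lra).
  assert (Hleft : 0 <= RInt (fun x => g x * h x) c e).
  { apply RInt_ge_0; [lra | apply Igh'; lra |]. intros x Hx.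
    destruct (Hpos x ltac:(lra)). now apply Rmult_le_pos. }
  assert (Hright : m * RInt g e d <= RInt (fun x => g x * h x) e d).
  { change (m * RInt g e d) with (scal m (RInt g e d)).
    rewrite <- (RInt_scal (V:=R_CompleteNormedModule) g e d m Ig).
    apply RInt_le; [lra | apply (ex_RInt_scal (V:=R_NormedModule)), Ig | apply Igh'; lra |].
    intros x Hx. change (m * g x <= g x * h x). rewrite Rmult_comm.
    apply Rmult_le_compat_l; [apply Hpos; lra | apply Hlow; lra]. }
  change (0 < RInt (fun x => g x * h x) c e + RInt (fun x => g x * h x) e d).
  pose proof (Rmult_lt_0_compat m _ Hm Hg). lra.
Qed.

Lemma RInt_mult_proportional (g h x : R -> R) c A : 0 <= A ->
  (forall a, 0 <= a <= A -> x a = c * h a) -> ex_RInt (fun a => g a * h a) 0 A ->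
  ex_RInt (fun a => g a * x a) 0 A /\ RInt (fun a => g a * x a) 0 A = c * RInt (fun a => g a * h a) 0 A.
Proof.
  intros HA Hx Igh.
  assert (Hext : forall a, Rmin 0 A < a < Rmax 0 A -> scal c (g a * h a) = g a * x a).
  { rewrite Rmin_left, Rmax_right by lra. intros a Ha. rewrite Hx by lra.
    change (c * (g a * h a) = g a * (c * h a)). ring. }
  split.
  - apply (ex_RInt_ext _ _ _ _ Hext), (ex_RInt_scal (V:=R_NormedModule)), Igh.
  - rewrite <- (RInt_ext _ _ _ _ Hext). now apply (RInt_scal (V:=R_CompleteNormedModule)).
Qed.

Section RenewalIntegral.

Variables (A : R) (k mu : R -> R).
Hypotheses (Hk : piecewise_extendable A k) (Hk0 : forall s, 0 <= s <= A -> 0 <= k s)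
  (HkA : 0 < RInt k 0 A) (Hmu : ex_RInt mu 0 A) (Hmu0 : forall s, 0 <= s <= A -> 0 <= mu s).

Lemma ex_RInt_mult_xtilde z : ex_RInt (fun a => k a * xtilde mu z a) 0 A.
Proof.
  apply ex_RInt_piecewise_mult; [exact Hk |].
  apply extends_continuously_xtilde; [exact (piecewise_extendable_nonneg A k Hk) | exact Hmu].
Qed.

Lemma RInt_mult_xtilde_pos_tail c e z : 0 <= c <= e -> e < A -> 0 < RInt k e A ->
  0 < RInt (fun a => k a * xtilde mu z a) c A.
Proof.
  intros Hce HeA Hke. apply (RInt_mult_pos k (xtilde mu z) c e A (exp (- (Rabs z * A + RInt mu 0 A)))).
  - lra.
  - apply (ex_RInt_subinterval _ 0 A); [apply ex_RInt_piecewise, Hk | lra | lra].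
  - apply (ex_RInt_subinterval _ 0 A); [apply ex_RInt_mult_xtilde | lra | lra].
  - exact Hke.
  - apply exp_pos.
  - intros x Hx. split; [apply Hk0; lra | left; apply exp_pos].
  - intros x Hx. apply xtilde_lower_bound; auto; lra.
Qed.

Lemma RInt_mult_xtilde_pos z : 0 < RInt (fun a => k a * xtilde mu z a) 0 A.
Proof.
  destruct (RInt_tail_pos k A (piecewise_extendable_nonneg A k Hk) (ex_RInt_piecewise A k Hk) HkA)
    as [e [He Hke]].
  apply (RInt_mult_xtilde_pos_tail 0 e); lra.
Qed.

Lemma RInt_mult_xtilde_sub z z' :
  RInt (fun a => k a * xtilde mu z a) 0 A - RInt (fun a => k a * xtilde mu z' a) 0 A
  = RInt (fun a => k a * xtilde mu z a * (1 - exp (- ((z' - z) * a)))) 0 A.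
Proof.
  pose proof (piecewise_extendable_nonneg A k Hk) as HA.
  change (minus (RInt (fun a => k a * xtilde mu z a) 0 A) (RInt (fun a => k a * xtilde mu z' a) 0 A)
          = RInt (fun a => k a * xtilde mu z a * (1 - exp (- ((z' - z) * a)))) 0 A).
  rewrite <- (RInt_minus (V:=R_CompleteNormedModule)) by apply ex_RInt_mult_xtilde.
  apply RInt_ext. rewrite Rmin_left, Rmax_right by lra. intros a Ha.
  rewrite (xtilde_shift mu z z') by (apply (ex_RInt_subinterval _ 0 A); auto; lra).
  change (k a * xtilde mu z a - k a * (xtilde mu z a * exp (- ((z' - z) * a)))
          = k a * xtilde mu z a * (1 - exp (- ((z' - z) * a)))). ring.
Qed.

(* The factor [1 - exp (-(z' - z) a)] is bounded below on [e, A], where [k] has mass. *)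
Lemma RInt_mult_xtilde_decreasing z z' : z < z' ->
  RInt (fun a => k a * xtilde mu z' a) 0 A < RInt (fun a => k a * xtilde mu z a) 0 A.
Proof.
  intros Hz. pose proof (piecewise_extendable_nonneg A k Hk) as HA.
  destruct (RInt_tail_pos k A HA (ex_RInt_piecewise A k Hk) HkA) as [e [He Hke]].
  pose proof (RInt_mult_xtilde_sub z z') as Hdiff.
  set (w := fun a => 1 - exp (- ((z' - z) * a))).
  assert (Cw : forall x, continuous w x).
  { intros x. apply (ex_derive_continuous (V:=R_NormedModule)). unfold w. auto_derive. easy. }
  assert (Hpos : 0 < RInt (fun a => k a * xtilde mu z a * w a) 0 A).
  { apply (RInt_mult_pos (fun a => k a * xtilde mu z a) w 0 e A (1 - exp (- ((z' - z) * e)))).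
    - lra.
    - apply (ex_RInt_subinterval _ 0 A); [apply ex_RInt_mult_xtilde | lra | lra].
    - apply (ex_RInt_ext (fun a => k a * (xtilde mu z a * w a)));
        [intros; symmetry; apply Rmult_assoc |].
      apply ex_RInt_piecewise_mult; [exact Hk |].
      apply extends_continuously_mult; [now apply extends_continuously_xtilde |].
      exists w. split; [exact Cw | easy].
    - apply (RInt_mult_xtilde_pos_tail e e); lra.
    - assert (exp (- ((z' - z) * e)) < 1) by (rewrite <- exp_0; apply exp_increasing; nra). lra.
    - intros a Ha. split.
      + apply Rmult_le_pos; [apply Hk0; lra | left; apply exp_pos].
      + assert (exp (- ((z' - z) * a)) <= 1) by (rewrite <- exp_0; apply exp_le_exp; nra).
        unfold w. lra.
    - intros a Ha. unfold w.
      assert (exp (- ((z' - z) * a)) <= exp (- ((z' - z) * e))) by (apply exp_le_exp; nra). lra. }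
  unfold w in Hpos. cbv beta in Hpos. lra.
Qed.

Lemma RInt_mult_xtilde_injective z z' :
  RInt (fun a => k a * xtilde mu z a) 0 A = RInt (fun a => k a * xtilde mu z' a) 0 A -> z = z'.
Proof.
  intros E. destruct (Rtotal_order z z') as [Hz | [Hz | Hz]]; [| exact Hz |].
  - pose proof (RInt_mult_xtilde_decreasing z z' Hz). lra.
  - pose proof (RInt_mult_xtilde_decreasing z' z Hz). lra.
Qed.

End RenewalIntegral.

(** * Steady states *)

Lemma admissible_kernel_extendable A f : admissible_kernel A f -> piecewise_extendable A f.
Proof. intros [Hf _]. now apply piecewise_continuous_extendable. Qed.

Lemma admissible_kernel_integrable A f : admissible_kernel A f -> ex_RInt f 0 A.
Proof. intros Hf. now apply ex_RInt_piecewise, admissible_kernel_extendable. Qed.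

Section AdmissibleKernels.

Variables (A : R) (mu k : R -> R).
Hypotheses (Hmu : admissible_kernel A mu) (Hk : admissible_kernel A k).

Lemma admissible_RInt_mult_xtilde z :
  ex_RInt (fun a => k a * xtilde mu z a) 0 A /\ 0 < RInt (fun a => k a * xtilde mu z a) 0 A.
Proof.
  pose proof (admissible_kernel_extendable A k Hk) as Pk.
  pose proof (admissible_kernel_integrable A mu Hmu) as Imu.
  destruct Hk as [_ [Hk0 HkA]]. destruct Hmu as [_ [Hmu0 _]].
  split; [now apply ex_RInt_mult_xtilde | now apply RInt_mult_xtilde_pos].
Qed.

Lemma admissible_RInt_mult_scaled_xtilde z c :
  ex_RInt (fun a => k a * (c * xtilde mu z a)) 0 A /\
  RInt (fun a => k a * (c * xtilde mu z a)) 0 A = c * RInt (fun a => k a * xtilde mu z a) 0 A.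
Proof.
  apply RInt_mult_proportional; [| easy | apply admissible_RInt_mult_xtilde].
  exact (piecewise_extendable_nonneg A k (admissible_kernel_extendable A k Hk)).
Qed.

Lemma xtilde_solves_decay zeta c q : (forall s, q s = zeta + mu s) ->
  solves_decay A q (fun a => c * xtilde mu zeta a).
Proof.
  intros Hq. apply (solves_decay_ext A (fun s => zeta + mu s)); [intros; now rewrite Hq |].
  apply solves_decay_scale, survival_solves_decay.
  apply (piecewise_extendable_comp A (fun y => zeta + y) mu).
  - apply continuous_Rplus_const.
  - now apply admissible_kernel_extendable.
Qed.

Lemma solves_decay_xtilde c q x : (forall s, q s = c + mu s) -> solves_decay A q x ->
  forall a, 0 <= a <= A -> x a = x 0 * xtilde mu c a.
Proof.
  intros Hq Hx. apply (decay_solution_unique A (fun s => c + mu s)).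
  - apply (piecewise_extendable_comp A (fun y => c + y) mu).
    + apply continuous_Rplus_const.
    + now apply admissible_kernel_extendable.
  - now apply (solves_decay_ext A q).
Qed.

Lemma renewal_forces_lotka_sharpe zeta c x : lotka_sharpe A mu k zeta -> 0 < x 0 ->
  (forall a, 0 <= a <= A -> x a = x 0 * xtilde mu c a) -> x 0 = RInt (fun a => k a * x a) 0 A ->
  c = zeta.
Proof.
  intros Hz Hx0 Hx Hren.
  pose proof (admissible_kernel_extendable A k Hk) as Pk.
  pose proof (admissible_kernel_integrable A mu Hmu) as Imu.
  pose proof (piecewise_extendable_nonneg A k Pk) as HA.
  destruct Hk as [_ [Hk0 HkA]]. destruct Hmu as [_ [Hmu0 _]].
  apply (RInt_mult_xtilde_injective A k mu); auto.
  rewrite (lotka_sharpe_xtilde A mu k zeta Hz).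
  rewrite (proj2 (RInt_mult_proportional k (xtilde mu c) x (x 0) A HA Hx
                   (ex_RInt_mult_xtilde A k mu Pk Imu c))) in Hren.
  apply (Rmult_eq_reg_l (x 0)); lra.
Qed.

End AdmissibleKernels.

Section SteadyStates.

Variables (A : R) (mu1 mu2 k1 k2 g1 g2 : R -> R) (zeta1 zeta2 : R).
Hypotheses (Hmu1 : admissible_kernel A mu1) (Hmu2 : admissible_kernel A mu2)
  (Hk1 : admissible_kernel A k1) (Hk2 : admissible_kernel A k2)
  (Hg1 : admissible_kernel A g1) (Hg2 : admissible_kernel A g2)
  (Hz1 : lotka_sharpe A mu1 k1 zeta1) (Hz2 : lotka_sharpe A mu2 k2 zeta2).

Lemma profile_steady_state u c1 c2 :
  RInt (fun a => g1 a * (c2 * xtilde mu2 zeta2 a)) 0 A = zeta1 - u ->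
  RInt (fun a => g2 a * (c1 * xtilde mu1 zeta1 a)) 0 A = / (zeta2 - u) ->
  steady_state A mu1 mu2 k1 k2 g1 g2 u
    (fun a => c1 * xtilde mu1 zeta1 a) (fun a => c2 * xtilde mu2 zeta2 a).
Proof.
  intros E1 E2. unfold steady_state. cbv beta zeta. rewrite E1, E2.
  pose proof (admissible_RInt_mult_scaled_xtilde A mu1 k1 Hmu1 Hk1 zeta1 c1) as [Ik1 Rk1].
  pose proof (admissible_RInt_mult_scaled_xtilde A mu2 k2 Hmu2 Hk2 zeta2 c2) as [Ik2 Rk2].
  rewrite (lotka_sharpe_xtilde A mu1 k1 zeta1 Hz1), Rmult_1_r in Rk1.
  rewrite (lotka_sharpe_xtilde A mu2 k2 zeta2 Hz2), Rmult_1_r in Rk2.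
  repeat match goal with |- _ /\ _ => split end.
  - apply (admissible_RInt_mult_scaled_xtilde A mu2 g1 Hmu2 Hg1).
  - apply (admissible_RInt_mult_scaled_xtilde A mu1 g2 Hmu1 Hg2).
  - exact Ik1.
  - exact Ik2.
  - apply (xtilde_solves_decay A mu1 Hmu1). intros; ring.
  - apply (xtilde_solves_decay A mu2 Hmu2). intros; rewrite Rinv_inv; ring.
  - now rewrite Rk1, xtilde_0, Rmult_1_r.
  - now rewrite Rk2, xtilde_0, Rmult_1_r.
Qed.

Lemma steady_state_exists u : 0 < u < Rmin zeta1 zeta2 ->
  let c1 := x1star0 A mu1 g2 zeta1 zeta2 u in
  let c2 := x2star0 A mu2 g1 zeta1 zeta2 u in
  let x1 := fun a => c1 * xtilde mu1 zeta1 a in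
  let x2 := fun a => c2 * xtilde mu2 zeta2 a in
  let lambda1 := RInt (fun a => g2 a * x1 a) 0 A in
  let lambda2 := RInt (fun a => g1 a * x2 a) 0 A in
  0 < c1 /\ 0 < c2 /\
  positive_on A x1 /\ positive_on A x2 /\
  steady_state A mu1 mu2 k1 k2 g1 g2 u x1 x2 /\
  0 < lambda1 /\ 0 < lambda2 /\
  u = zeta1 - lambda2 /\ u = zeta2 - / lambda1.
Proof.
  intros Hu c1 c2 x1 x2 lambda1 lambda2.
  pose proof (Rmin_l zeta1 zeta2). pose proof (Rmin_r zeta1 zeta2).
  destruct (admissible_RInt_mult_xtilde A mu1 g2 Hmu1 Hg2 zeta1) as [_ HG21].
  destruct (admissible_RInt_mult_xtilde A mu2 g1 Hmu2 Hg1 zeta2) as [_ HG12].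
  assert (Hc1 : 0 < c1) by (apply Rinv_0_lt_compat, Rmult_lt_0_compat; lra).
  assert (Hc2 : 0 < c2) by (apply Rdiv_lt_0_compat; lra).
  assert (L1 : @eq R lambda1 (/ (zeta2 - u))).
  { unfold lambda1, x1. rewrite (proj2 (admissible_RInt_mult_scaled_xtilde A mu1 g2 Hmu1 Hg2 zeta1 c1)).
    unfold c1, x1star0. field. split; lra. }
  assert (L2 : @eq R lambda2 (zeta1 - u)).
  { unfold lambda2, x2. rewrite (proj2 (admissible_RInt_mult_scaled_xtilde A mu2 g1 Hmu2 Hg1 zeta2 c2)).
    unfold c2, x2star0. field. lra. }
  split; [exact Hc1 |]. split; [exact Hc2 |].
  split; [intros a _; apply Rmult_lt_0_compat; [exact Hc1 | apply exp_pos] |].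
  split; [intros a _; apply Rmult_lt_0_compat; [exact Hc2 | apply exp_pos] |].
  split; [now apply profile_steady_state |].
  rewrite L1, L2, Rinv_inv. repeat split; [apply Rinv_0_lt_compat | | |]; lra.
Qed.

Lemma steady_state_necessary u x1 x2 : 0 < u ->
  positive_on A x1 -> positive_on A x2 ->
  steady_state A mu1 mu2 k1 k2 g1 g2 u x1 x2 ->
  0 < u < Rmin zeta1 zeta2 /\
  x1 0 = x1star0 A mu1 g2 zeta1 zeta2 u /\
  x2 0 = x2star0 A mu2 g1 zeta1 zeta2 u /\
  (forall a, 0 <= a <= A -> x1 a = x1 0 * xtilde mu1 zeta1 a /\ x2 a = x2 0 * xtilde mu2 zeta2 a).
Proof.
  intros Hu P1 P2 SS. cbv zeta in SS.
  destruct SS as [_ [_ [_ [_ [E1 [E2 [B1 B2]]]]]]].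
  set (I1 := RInt (fun al => g1 al * x2 al) 0 A : R) in *.
  set (I2 := RInt (fun al => g2 al * x1 al) 0 A : R) in *.
  pose proof (piecewise_extendable_nonneg A mu1 (admissible_kernel_extendable A mu1 Hmu1)) as HA.
  assert (Hx10 : 0 < x1 0) by (apply P1; lra).
  assert (Hx20 : 0 < x2 0) by (apply P2; lra).
  assert (U1 : forall a, 0 <= a <= A -> x1 a = x1 0 * xtilde mu1 (u + I1) a).
  { apply (solves_decay_xtilde A mu1 Hmu1 _ (fun s => mu1 s + u + I1)); [intros; ring | exact E1]. }
  assert (U2 : forall a, 0 <= a <= A -> x2 a = x2 0 * xtilde mu2 (u + / I2) a).
  { apply (solves_decay_xtilde A mu2 Hmu2 _ (fun s => mu2 s + u + / I2)); [intros; ring | exact E2]. }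
  pose proof (renewal_forces_lotka_sharpe A mu1 k1 Hmu1 Hk1 zeta1 _ x1 Hz1 Hx10 U1 B1) as Z1.
  pose proof (renewal_forces_lotka_sharpe A mu2 k2 Hmu2 Hk2 zeta2 _ x2 Hz2 Hx20 U2 B2) as Z2.
  rewrite Z1 in U1. rewrite Z2 in U2.
  destruct (admissible_RInt_mult_xtilde A mu1 g2 Hmu1 Hg2 zeta1) as [IG21 HG21].
  destruct (admissible_RInt_mult_xtilde A mu2 g1 Hmu2 Hg1 zeta2) as [IG12 HG12].
  pose proof (proj2 (RInt_mult_proportional g1 _ x2 (x2 0) A HA U2 IG12)) as EI1. fold I1 in EI1.
  pose proof (proj2 (RInt_mult_proportional g2 _ x1 (x1 0) A HA U1 IG21)) as EI2. fold I2 in EI2.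
  assert (HI1 : 0 < I1) by (rewrite EI1; now apply Rmult_lt_0_compat).
  assert (HI2 : 0 < I2) by (rewrite EI2; now apply Rmult_lt_0_compat).
  pose proof (Rinv_0_lt_compat I2 HI2).
  split; [split; [exact Hu | apply Rmin_glb_lt; lra] |].
  split; [| split; [| exact (fun a Ha => conj (U1 a Ha) (U2 a Ha))]].
  - unfold x1star0. rewrite <- Z2. replace (u + / I2 - u) with (/ I2) by ring.
    rewrite EI2. field. lra.
  - unfold x2star0. rewrite <- Z1. replace (u + I1 - u) with I1 by ring.
    rewrite EI1. field. lra.
Qed.

End SteadyStates.

Theorem proposition1
  (A : R) (mu1 mu2 k1 k2 g1 g2 : R -> R) (zeta1 zeta2 : R)
  (HA : 0 < A)
  (Hmu1 : admissible_kernel A mu1) (Hmu2 : admissible_kernel A mu2)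
  (Hk1 : admissible_kernel A k1) (Hk2 : admissible_kernel A k2)
  (Hg1 : admissible_kernel A g1) (Hg2 : admissible_kernel A g2)
  (Hz1 : lotka_sharpe A mu1 k1 zeta1) (Hz2 : lotka_sharpe A mu2 k2 zeta2) :
  (forall ustar : R, 0 < ustar < Rmin zeta1 zeta2 ->
     let c1 := x1star0 A mu1 g2 zeta1 zeta2 ustar in
     let c2 := x2star0 A mu2 g1 zeta1 zeta2 ustar in
     let x1 := fun a => c1 * xtilde mu1 zeta1 a in
     let x2 := fun a => c2 * xtilde mu2 zeta2 a in
     let lambda1 := RInt (fun a => g2 a * x1 a) 0 A in
     let lambda2 := RInt (fun a => g1 a * x2 a) 0 A in
     0 < c1 /\ 0 < c2 /\
     positive_on A x1 /\ positive_on A x2 /\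
     steady_state A mu1 mu2 k1 k2 g1 g2 ustar x1 x2 /\
     0 < lambda1 /\ 0 < lambda2 /\
     ustar = zeta1 - lambda2 /\ ustar = zeta2 - / lambda1) /\
  (forall (ustar : R) (x1 x2 : R -> R),
     0 < ustar ->
     positive_on A x1 -> positive_on A x2 ->
     steady_state A mu1 mu2 k1 k2 g1 g2 ustar x1 x2 ->
     0 < ustar < Rmin zeta1 zeta2 /\
     x1 0 = x1star0 A mu1 g2 zeta1 zeta2 ustar /\
     x2 0 = x2star0 A mu2 g1 zeta1 zeta2 ustar /\
     (forall a, 0 <= a <= A ->
        x1 a = x1 0 * xtilde mu1 zeta1 a /\
        x2 a = x2 0 * xtilde mu2 zeta2 a)).
Proof.
  split.
  - exact (steady_state_exists A mu1 mu2 k1 k2 g1 g2 zeta1 zeta2 Hmu1 Hmu2 Hk1 Hk2 Hg1 Hg2 Hz1 Hz2).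
  - exact (steady_state_necessary A mu1 mu2 k1 k2 g1 g2 zeta1 zeta2 Hmu1 Hmu2 Hk1 Hk2 Hg1 Hg2 Hz1 Hz2).
Qed.
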